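(* Let $G(\pi)=\mathcal{F}(\mu^\pi)$ be a general-utility objective with $\mathcal{F}$ concave and differentiable, and $\Gamma(\pi)=\nabla\mathcal{F}(\mu^\pi)$. For any policies $\pi,\pi'$, $$G(\pi')-G(\pi)\le\frac{1}{1-\gamma}\,\mathbb{E}_{s\sim d^{\pi'}}\Big[\big[\mathcal{T}^{\pi'}_{\Gamma(\pi)}V^\pi_{\Gamma(\pi)}\big](s)-V^\pi_{\Gamma(\pi)}(s)\Big].$$
   Context: Finite MDP: states $\mathcal{S}$, actions $\mathcal{A}$, transition kernel $\mathcal{P}$, initial distribution $\rho$, discount $\gamma\in[0,1)$. Occupancy measure $\mu^\pi(s,a)=\sum_{s_0}\rho(s_0)\sum_{\tau\ge0}\gamma^\tau\Pr^\pi[s_\tau=s,a_\tau=a\mid s_0]$; $\mathcal{K}$ the convex set of occupancy measures; $\mathcal{F}:\mathcal{K}\to\mathbb{R}$. For bounded $u$, $Q^\pi_u(s,a)=\mathbb{E}[\sum_{\tau\ge0}\gamma^\tau u(s_\tau,a_\tau)\mid s_0=s,a_0=a]$, $V^\pi_u(s)=\sum_a\pi(a\mid s)Q^\pi_u(s,a)$. Bellman operator: $[\mathcal{T}^{\pi'}_uV](s)=\sum_a\pi'(a\mid s)\big(u(s,a)+\gamma\sum_{s'}\mathcal{P}(s'\mid s,a)V(s')\big)$. Discounted state distribution: $d^{\pi'}=(1-\gamma)\rho^\top(I-\gamma P^{\pi'})^{-1}$ where $P^{\pi'}[s,s']=\sum_a\pi'(a\mid s)\mathcal{P}(s'\mid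 s,a)$. *)

From HB Require Import structures.
From mathcomp Require Import all_boot all_order all_algebra.
From mathcomp Require Import all_classical all_reals all_analysis.
Set Implicit Arguments. Unset Strict Implicit. Unset Printing Implicit Defensive.
Import Order.TTheory GRing.Theory Num.Theory.
Import numFieldNormedType.Exports.
Local Open Scope classical_set_scope.
Local Open Scope ring_scope.

(* Finite MDP with states 'I_nS and actions 'I_nA.
   Transition kernel: Ptr s a s' = P(s' | s, a).  Initial distribution rho.
   Policies are stochastic matrices pi : 'M_(nS, nA), pi s a = pi(a | s). *)
Section MDP.
Variables (R : realType) (nS nA : nat).
Variable Ptr : 'I_nS -> 'I_nA -> 'I_nS -> R.
Variable rho : 'I_nS -> R.
Variable gamma : R.

Definition is_kernel :=
  (forall s a s', 0 <= Ptr s a s') /\ (forall s a, \sum_s' Ptr s a s' = 1).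

Definition is_distr :=
  (forall s, 0 <= rho s) /\ \sum_s rho s = 1.

Definition is_policy (pi : 'M[R]_(nS, nA)) :=
  (forall s a, 0 <= pi s a) /\ (forall s, \sum_a pi s a = 1).

Definition Ppi (pi : 'M[R]_(nS, nA)) : 'M[R]_nS :=
  \matrix_(s, s') \sum_a pi s a * Ptr s a s'.

(* Pr^pi[s_t = s, a_t = a | s_0 = s0] *)
Definition prob_sa (pi : 'M[R]_(nS, nA)) (t : nat) (s0 s : 'I_nS) (a : 'I_nA) : R :=
  ((Ppi pi) ^+ t) s0 s * pi s a.

Definition disc_sum (f : nat -> R) : R :=
  limn (fun n => \sum_(0 <= t < n) gamma ^+ t * f t).

Definition occ (pi : 'M[R]_(nS, nA)) : 'M[R]_(nS, nA) :=
  \matrix_(s, a) \sum_s0 rho s0 * disc_sum (fun t => prob_sa pi t s0 s a).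

Definition occK : set 'M[R]_(nS, nA) :=
  [set mu | exists pi, is_policy pi /\ mu = occ pi].

(* Pr^pi[s_t = s', a_t = a' | s_0 = s, a_0 = a] *)
Definition cprob_sa (pi : 'M[R]_(nS, nA)) (s : 'I_nS) (a : 'I_nA) (t : nat)
    (s' : 'I_nS) (a' : 'I_nA) : R :=
  match t with
  | 0 => ((s' == s) && (a' == a))%:R
  | t'.+1 => \sum_s1 Ptr s a s1 * ((Ppi pi) ^+ t') s1 s' * pi s' a'
  end.

(* Q^pi_u(s,a) = E[ sum_t gamma^t u(s_t,a_t) | s_0 = s, a_0 = a ] *)
Definition Qfun (pi : 'M[R]_(nS, nA)) (u : 'M[R]_(nS, nA)) (s : 'I_nS) (a : 'I_nA) : R :=
  disc_sum (fun t => \sum_s' \sum_a' cprob_sa pi s a t s' a' * u s' a').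

Definition Vfun (pi : 'M[R]_(nS, nA)) (u : 'M[R]_(nS, nA)) (s : 'I_nS) : R :=
  \sum_a pi s a * Qfun pi u s a.

Definition bellman (pi' : 'M[R]_(nS, nA)) (u : 'M[R]_(nS, nA)) (V : 'I_nS -> R)
    (s : 'I_nS) : R :=
  \sum_a pi' s a * (u s a + gamma * \sum_s' Ptr s a s' * V s').

Definition dstate (pi' : 'M[R]_(nS, nA)) : 'rV[R]_nS :=
  (1 - gamma) *: ((\row_s rho s) *m invmx (1%:M - gamma *: Ppi pi')).

End MDP.

Definition concave_on (R : realType) (m n : nat) (K : set 'M[R]_(m, n))
    (F : 'M[R]_(m, n) -> R) :=
  forall x y t, K x -> K y -> 0 <= t <= 1 ->
    t * F x + (1 - t) * F y <= F (t *: x + (1 - t) *: y).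

Definition gradient (R : realType) (m n : nat) (F : 'M[R]_(m, n) -> R)
    (x : 'M[R]_(m, n)) : 'M[R]_(m, n) :=
  \matrix_(i, j) ('d F x (delta_mx i j : 'M[R]_(m, n))).

From HB Require Import structures.
From mathcomp Require Import all_boot all_order all_algebra.
From mathcomp Require Import all_classical all_reals all_analysis.
From mathcomp Require Import ring lra.
Import Order.TTheory GRing.Theory Num.Theory.
Import numFieldNormedType.Exports.
Local Open Scope classical_set_scope.
Local Open Scope ring_scope.

(* Concavity gives G(pi') - G(pi) <= <grad F(mu^pi), mu^pi' - mu^pi>, so it
   suffices to prove the performance-difference identity for the fixed reward
   u = Gamma(pi).  Everything is expressed through the resolvent
   M_pi = sum_t gamma^t (P^pi)^t = (I - gamma P^pi)^-1 of the state chain: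
   mu^pi(s,a) = (rho^T M_pi)(s) pi(a|s), V^pi_u = M_pi r^pi_u with r^pi_u the
   expected one-step reward, and d^pi' = (1 - gamma) rho^T M_pi'.  Since
   T^pi'_u V - V = r^pi'_u - (I - gamma P^pi') V, multiplying by rho^T M_pi'
   gives rho^T M_pi' r^pi'_u - rho^T V^pi_u = <mu^pi' - mu^pi, u>. *)

Section ConcaveDifferentiable.
Context {R : realType} {m n : nat}.
Implicit Types (K : set 'M[R]_(m, n)) (F : 'M[R]_(m, n) -> R) (x y : 'M[R]_(m, n)).

Lemma concave_le_diff {K F x y} : concave_on K F -> K x -> K y ->
  differentiable F x -> F y - F x <= 'd F x (y - x).
Proof.
move=> Fconc Kx Ky dFx; rewrite -deriveE //.
have /cvg_dnbhs_at_right Dcvg : derivable F x (y - x) by exact: diff_derivable.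
apply: (cvgr_to_ge Dcvg); near=> t.
have t_gt0 : 0 < t by near: t; exact: nbhs_right_gt.
have t_lt1 : t < 1 by near: t; exact: nbhs_right_lt.
have /= := Fconc y x t Ky Kx; rewrite (ltW t_gt0) (ltW t_lt1) => /(_ isT).
have -> : t *: y + (1 - t) *: x = t *: (y - x) + x.
  by apply/matrixP => i j; rewrite !mxE; ring.
move=> Fseg; rewrite ler_pdivlMl //; lra.
Unshelve. all: by end_near.
Qed.

Lemma diff_gradientE F x v :
  'd F x v = \sum_i \sum_j v i j * gradient F x i j.
Proof.
rewrite [in LHS](matrix_sum_delta v) linear_sum; apply: eq_bigr => i _.
by rewrite linear_sum; apply: eq_bigr => j _; rewrite linearZ mxE.
Qed.

End ConcaveDifferentiable.

Section EntrywiseCvg.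
Context {R : realType} {T : Type} {G : set_system T} {G_filter : Filter G}.

Lemma cvg_mulmxl {m n p} (B : 'M[R]_(m, n))
    {A : T -> 'M[R]_(n, p)} {L : 'M[R]_(n, p)} :
    (forall i j, A k i j @[k --> G] --> L i j) ->
  forall i j, (B *m A k) i j @[k --> G] --> (B *m L) i j.
Proof.
move=> AL i j; rewrite mxE; under eq_cvg do rewrite mxE.
apply: cvg_big => [|l _]; [exact: add_continuous | exact: cvgMl_tmp (AL l j)].
Qed.

Lemma cvg_mulmxr {m n p} {A : T -> 'M[R]_(m, n)} (B : 'M[R]_(n, p))
    {L : 'M[R]_(m, n)} :
    (forall i j, A k i j @[k --> G] --> L i j) ->
  forall i j, (A k *m B) i j @[k --> G] --> (L *m B) i j.
Proof.
move=> AL i j; rewrite mxE; under eq_cvg do rewrite mxE.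
apply: cvg_big => [|l _]; [exact: add_continuous | exact: cvgMr_tmp (AL i l)].
Qed.

End EntrywiseCvg.

Definition row_stochastic {R : realType} {n : nat} (P : 'M[R]_n) :=
  (forall i j, 0 <= P i j) /\ (forall i, \sum_j P i j = 1).

Section RowStochastic.
Context {R : realType} {n : nat}.
Implicit Types P Q : 'M[R]_n.

Lemma row_stochastic1 : row_stochastic (1%:M : 'M[R]_n).
Proof.
split=> [i j|i]; first by rewrite mxE ler0n.
rewrite (bigD1 i) //= big1 => [|j /negbTE ji]; rewrite mxE ?eqxx ?addr0 //.
by rewrite eq_sym ji.
Qed.

Lemma row_stochasticM P Q :
  row_stochastic P -> row_stochastic Q -> row_stochastic (P *m Q).
Proof.
move=> [P_ge0 P_sum1] [Q_ge0 Q_sum1]; split=> [i j|i].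
  by rewrite mxE; apply: sumr_ge0 => k _; exact: mulr_ge0.
under eq_bigr do rewrite mxE.
rewrite exchange_big /=.
by under eq_bigr do rewrite -big_distrr /= Q_sum1 mulr1.
Qed.

Lemma row_stochasticX P t : row_stochastic P -> row_stochastic (P ^+ t).
Proof.
move=> stochP; elim: t => [|t IH]; first exact: row_stochastic1.
by rewrite exprS; exact: row_stochasticM.
Qed.

Lemma row_stochastic_le1 P i j : row_stochastic P -> P i j <= 1.
Proof.
move=> [P_ge0 P_sum1]; rewrite -(P_sum1 i) (bigD1 j) //= lerDl.
by apply: sumr_ge0.
Qed.

End RowStochastic.

Lemma geometric_psum_le {R : realType} {g : R} k : 0 <= g -> g < 1 ->
  \sum_(0 <= t < k) g ^+ t <= (1 - g)^-1.
Proof.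
move=> g_ge0 g_lt1; have gB_gt0 : 0 < 1 - g by rewrite subr_gt0.
have -> : \sum_(0 <= t < k) g ^+ t = series (geometric 1 g) k.
  by rewrite seriesEnat; apply: eq_bigr => t _; rewrite /geometric /= mul1r.
rewrite geometric_seriesE ?lt_eqF //= mul1r ler_pdivrMr // mulVf ?gt_eqF //.
by rewrite gerBl exprn_ge0.
Qed.

Section Resolvent.
Context {R : realType} {n : nat}.
Variables (P : 'M[R]_n) (g : R).

Definition discounted_psum k : 'M[R]_n := \sum_(0 <= t < k) g ^+ t *: P ^+ t.

(* Entrywise limit, matching how [disc_sum] defines [occ] and [Qfun]. *)
Definition resolvent : 'M[R]_n :=
  \matrix_(i, j) limn (fun k => discounted_psum k i j).

Lemma discounted_psumE k i j :
  discounted_psum k i j = \sum_(0 <= t < k) g ^+ t * (P ^+ t) i j.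
Proof. by rewrite summxE; apply: eq_bigr => t _; rewrite mxE. Qed.

Lemma discounted_psumSl k :
  discounted_psum k.+1 = 1%:M + g *: (P *m discounted_psum k).
Proof.
rewrite /discounted_psum big_nat_recl // !expr0 scale1r; congr (_ + _).
rewrite mulmx_sumr scaler_sumr; apply: eq_bigr => t _.
by rewrite !exprS -scalemxAr scalerA.
Qed.

Lemma discounted_psumSr k :
  discounted_psum k.+1 = 1%:M + g *: (discounted_psum k *m P).
Proof.
rewrite /discounted_psum big_nat_recl // !expr0 scale1r; congr (_ + _).
rewrite mulmx_suml scaler_sumr; apply: eq_bigr => t _.
by rewrite exprS exprSr -scalemxAl scalerA.
Qed.

Hypotheses (stochP : row_stochastic P) (g_ge0 : 0 <= g) (g_lt1 : g < 1).

Lemma cvg_resolvent i j :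
  discounted_psum k i j @[k --> \oo] --> resolvent i j.
Proof.
rewrite mxE; apply: nondecreasing_is_cvgn.
  apply/nondecreasing_seqP => k; rewrite !discounted_psumE big_nat_recr //= lerDl.
  by rewrite mulr_ge0 ?exprn_ge0 //; case: (row_stochasticX P k stochP).
exists (1 - g)^-1 => _ [k _ <-]; rewrite discounted_psumE.
apply: le_trans _ (geometric_psum_le k g_ge0 g_lt1); apply: ler_sum => t _.
by rewrite ler_piMr ?exprn_ge0 // row_stochastic_le1 //; exact: row_stochasticX.
Qed.

Lemma resolvent_fixl : resolvent = 1%:M + g *: (P *m resolvent).
Proof.
apply/matrixP => i j; rewrite [LHS]mxE; apply: cvg_lim => //.
have entryE A : (1%:M + g *: A) i j = 1%:M i j + g * A i j by rewrite !mxE.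
rewrite -cvg_shiftS /=; under eq_cvg do rewrite discounted_psumSl entryE.
rewrite entryE; apply: cvgD; first exact: cvg_cst.
exact: cvgMl_tmp (cvg_mulmxl P cvg_resolvent i j).
Qed.

Lemma resolvent_fixr : resolvent = 1%:M + g *: (resolvent *m P).
Proof.
apply/matrixP => i j; rewrite [LHS]mxE; apply: cvg_lim => //.
have entryE A : (1%:M + g *: A) i j = 1%:M i j + g * A i j by rewrite !mxE.
rewrite -cvg_shiftS /=; under eq_cvg do rewrite discounted_psumSr entryE.
rewrite entryE; apply: cvgD; first exact: cvg_cst.
exact: cvgMl_tmp (cvg_mulmxr P cvg_resolvent i j).
Qed.

Lemma resolventKr : resolvent *m (1%:M - g *: P) = 1%:M.
Proof. by rewrite mulmxBr mulmx1 -scalemxAr {1}resolvent_fixr addrK. Qed.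

Lemma invmx_resolvent : invmx (1%:M - g *: P) = resolvent.
Proof.
have [_ unitA] := mulmx1_unit resolventKr.
have := congr1 (mulmx^~ (invmx (1%:M - g *: P))) resolventKr.
by rewrite -mulmxA mulmxV // mulmx1 mul1mx => ->.
Qed.

End Resolvent.

Section DiscountedMDP.
Context {R : realType} {nS nA : nat}.
Variables (Ptr : 'I_nS -> 'I_nA -> 'I_nS -> R) (rho : 'I_nS -> R) (gamma : R).
Implicit Types (pi u : 'M[R]_(nS, nA)) (V : 'I_nS -> R).

Definition reward pi u : 'cV[R]_nS := \col_s \sum_a pi s a * u s a.

Lemma bellmanE pi u V s :
  bellman Ptr gamma pi u V s =
    (reward pi u + gamma *: (Ppi Ptr pi *m \col_s' V s')) s 0.
Proof.
rewrite /bellman 3!mxE; under eq_bigr do rewrite mulrDr.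
rewrite big_split /=; congr (_ + _).
under eq_bigr do rewrite mulrCA big_distrr /=.
rewrite -big_distrr exchange_big /=; congr (_ * _); rewrite mxE.
apply: eq_bigr => s' _; rewrite !mxE big_distrl.
by apply: eq_bigr => a _; rewrite mulrA.
Qed.

Lemma cprob_reward0 pi u s a :
  \sum_s' \sum_a' cprob_sa Ptr pi s a 0 s' a' * u s' a' = u s a.
Proof.
rewrite (bigD1 s) //= (bigD1 a) //= !eqxx mul1r big1 => [|a' /negbTE ->]; last first.
  by rewrite andbF mul0r.
rewrite big1 ?addr0 // => s' /negbTE ->.
by apply: big1 => a' _; rewrite mul0r.
Qed.

Lemma cprob_rewardS pi u s a t :
  \sum_s' \sum_a' cprob_sa Ptr pi s a t.+1 s' a' * u s' a' =
    \sum_s1 Ptr s a s1 * (Ppi Ptr pi ^+ t *m reward pi u) s1 0.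
Proof.
under eq_bigr do under eq_bigr do rewrite /= big_distrl /=.
under eq_bigr do rewrite exchange_big /=.
rewrite exchange_big /=; apply: eq_bigr => s1 _.
rewrite mxE big_distrr /=; apply: eq_bigr => s' _.
by rewrite mxE !big_distrr /=; apply: eq_bigr => a' _; rewrite !mulrA.
Qed.

Hypotheses (hP : is_kernel Ptr) (g_ge0 : 0 <= gamma) (g_lt1 : gamma < 1).

Lemma row_stochastic_Ppi pi : is_policy pi -> row_stochastic (Ppi Ptr pi).
Proof.
have [P_ge0 P_sum1] := hP; move=> [pi_ge0 pi_sum1]; split=> [s s'|s].
  by rewrite mxE; apply: sumr_ge0 => a _; exact: mulr_ge0.
under eq_bigr do rewrite mxE.
rewrite exchange_big /=.
by under eq_bigr do rewrite -big_distrr /= P_sum1 mulr1.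
Qed.

Lemma occE pi s a : is_policy pi ->
  occ Ptr rho gamma pi s a =
    (\row_s' rho s' *m resolvent (Ppi Ptr pi) gamma) 0 s * pi s a.
Proof.
move=> hpi; rewrite 2!mxE big_distrl; apply: eq_bigr => s0 _.
rewrite mxE /= -mulrA; congr (_ * _); apply: cvg_lim => //.
have psumE k : \sum_(0 <= t < k) gamma ^+ t * prob_sa Ptr pi t s0 s a
    = discounted_psum (Ppi Ptr pi) gamma k s0 s * pi s a.
  by rewrite discounted_psumE big_distrl; apply: eq_bigr => t _; rewrite mulrA.
under eq_cvg do rewrite psumE.
by apply: cvgMr_tmp; apply: cvg_resolvent => //; exact: row_stochastic_Ppi.
Qed.

Lemma sum_occ_mul pi u : is_policy pi ->
  \sum_s \sum_a occ Ptr rho gamma pi s a * u s a =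
    (\row_s' rho s' *m resolvent (Ppi Ptr pi) gamma *m reward pi u) 0 0.
Proof.
move=> hpi; rewrite mxE; apply: eq_bigr => s _.
rewrite [reward _ _ _ _]mxE big_distrr /=; apply: eq_bigr => a _.
by rewrite occE // mulrA.
Qed.

Lemma QfunE pi u s a : is_policy pi ->
  Qfun Ptr gamma pi u s a =
    u s a + gamma * \sum_s1 Ptr s a s1
                      * (resolvent (Ppi Ptr pi) gamma *m reward pi u) s1 0.
Proof.
move=> hpi; apply: cvg_lim => //; rewrite -cvg_shiftS /=.
have psumE k :
    \sum_(0 <= t < k.+1) gamma ^+ t
      * \sum_s' \sum_a' cprob_sa Ptr pi s a t s' a' * u s' a' =
    u s a + gamma * \sum_s1 Ptr s a s1
                      * (discounted_psum (Ppi Ptr pi) gamma k *m reward pi u) s1 0.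
  rewrite big_nat_recl // expr0 mul1r cprob_reward0; congr (_ + _).
  under eq_bigr do rewrite cprob_rewardS exprS -mulrA.
  rewrite -big_distrr /=; congr (_ * _).
  under eq_bigr => t _ do rewrite big_distrr /=.
  rewrite exchange_big /=; apply: eq_bigr => s1 _.
  rewrite mulmx_suml summxE big_distrr /=; apply: eq_bigr => t _.
  by rewrite -scalemxAl [in RHS]mxE mulrCA.
under eq_cvg do rewrite psumE.
apply: cvgD; first exact: cvg_cst.
apply: cvgMl_tmp; apply: cvg_big => [|s1 _]; first exact: add_continuous.
have stochP := row_stochastic_Ppi pi hpi.
exact: cvgMl_tmp (cvg_mulmxr _ (cvg_resolvent _ _ stochP g_ge0 g_lt1) s1 0).
Qed.

Lemma VfunE pi u s : is_policy pi ->
  Vfun Ptr gamma pi u s = (resolvent (Ppi Ptr pi) gamma *m reward pi u) s 0.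
Proof.
move=> hpi; set X := resolvent (Ppi Ptr pi) gamma *m reward pi u.
have -> : Vfun Ptr gamma pi u s = bellman Ptr gamma pi u (fun s' => X s' 0) s.
  by apply: eq_bigr => a _; rewrite QfunE.
have colXE : \col_s' X s' 0 = X by apply/matrixP => s' j; rewrite (ord1 j) mxE.
have stochP := row_stochastic_Ppi pi hpi.
rewrite bellmanE colXE [in RHS]/X (resolvent_fixl _ _ stochP) //.
by rewrite mulmxDl mul1mx -scalemxAl -mulmxA.
Qed.

Lemma performance_difference pi pi' u : is_policy pi -> is_policy pi' ->
  let V := Vfun Ptr gamma pi u in
  \sum_s \sum_a (occ Ptr rho gamma pi' s a - occ Ptr rho gamma pi s a) * u s a =
    (1 - gamma)^-1 * \sum_s dstate Ptr rho gamma pi' 0 s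
                              * (bellman Ptr gamma pi' u V s - V s).
Proof.
move=> hpi hpi' V.
have stochP' := row_stochastic_Ppi pi' hpi'.
set M' := resolvent (Ppi Ptr pi') gamma.
set X := resolvent (Ppi Ptr pi) gamma *m reward pi u.
have colVE : \col_s V s = X.
  by apply/matrixP => s j; rewrite (ord1 j) mxE /V VfunE.
have advantageE : \col_s (bellman Ptr gamma pi' u V s - V s) =
    reward pi' u - (1%:M - gamma *: Ppi Ptr pi') *m X.
  apply/matrixP => s j; rewrite (ord1 j) mxE bellmanE colVE /V VfunE // -/X.
  by rewrite mulmxBl mul1mx -scalemxAl !mxE; ring.
have -> : \sum_s dstate Ptr rho gamma pi' 0 s * (bellman Ptr gamma pi' u V s - V s)
    = (dstate Ptr rho gamma pi' *m \col_s (bellman Ptr gamma pi' u V s - V s)) 0 0.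
  by rewrite mxE; apply: eq_bigr => s _; rewrite !mxE.
rewrite advantageE /dstate (invmx_resolvent _ _ stochP') // -/M' -scalemxAl mxE.
rewrite mulrA mulVf ?mul1r ?subr_eq0 1?eq_sym ?lt_eqF //.
rewrite mulmxBr mulmxA.
have -> : \row_s rho s *m M' *m (1%:M - gamma *: Ppi Ptr pi') = \row_s rho s.
  by rewrite -mulmxA (resolventKr _ _ stochP') // mulmx1.
rewrite [((_ - _ : 'M[R]_(_, _)) _ _)]mxE [((- _ : 'M[R]_(_, _)) _ _)]mxE /X mulmxA.
rewrite -!sum_occ_mul // -sumrB; apply: eq_bigr => s _.
by rewrite -sumrB; apply: eq_bigr => a _; rewrite mulrBl.
Qed.

End DiscountedMDP.

Theorem lemma16 (R : realType) (nS nA : nat)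
    (Ptr : 'I_nS -> 'I_nA -> 'I_nS -> R) (rho : 'I_nS -> R) (gamma : R)
    (F : 'M[R]_(nS, nA) -> R)
    (hP : is_kernel Ptr) (hrho : is_distr rho)
    (hgamma : 0 <= gamma < 1)
    (hconc : concave_on (occK Ptr rho gamma) F)
    (hdiff : forall mu, occK Ptr rho gamma mu -> differentiable F mu)
    (pi pi' : 'M[R]_(nS, nA)) (hpi : is_policy pi) (hpi' : is_policy pi') :
  let G := fun p => F (occ Ptr rho gamma p) in
  let Gam := gradient F (occ Ptr rho gamma pi) in
  let V := Vfun Ptr gamma pi Gam in
  G pi' - G pi <=
    (1 - gamma)^-1 *
      \sum_s dstate Ptr rho gamma pi' 0 s
               * (bellman Ptr gamma pi' Gam V s - V s).
Proof.
cbv zeta; have /andP[g_ge0 g_lt1] := hgamma.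
have Kocc p : is_policy p -> occK Ptr rho gamma (occ Ptr rho gamma p) by exists p.
rewrite -(performance_difference _ _ _ hP g_ge0 g_lt1) //.
set mu := occ Ptr rho gamma pi; set mu' := occ Ptr rho gamma pi'.
have -> : \sum_s \sum_a (mu' s a - mu s a) * gradient F mu s a = 'd F mu (mu' - mu).
  by rewrite diff_gradientE; apply: eq_bigr => s _; apply: eq_bigr => a _; rewrite !mxE.
by apply: concave_le_diff hconc _ _ (hdiff _ _); apply: Kocc.
Qed.
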